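(* For every Pólya frequency power series $f(t)=\sum_{k\ge1}f_kt^k$ with $f_1\neq0$, there exists a constant $\alpha>0$ such that the quasi-Riordan array $\left[\frac1{1-\alpha t},f(t)\right]$ is not totally positive, although both $\frac1{1-\alpha t}$ and $f(t)$ are Pólya frequency power series.
   Context: For formal power series $g(t)=\sum_{n\ge0}g_nt^n$ with $g_0=1$ and $f(t)=\sum_{n\ge1}f_nt^n$ with $f_1\ne0$, the quasi-Riordan array $[g,f]$ is the infinite lower triangular matrix $(r_{n,k})_{n,k\ge0}$ with $r_{n,0}=g_n$ and $r_{n,k}=f_{n-k+1}$ for $k\ge1$ (with $f_j=0$ for $j\le0$), i.e. its columns have generating functions $g,f,tf,t^2f,\dots$. An infinite matrix is totally positive (TP) if all its minors are nonnegative. A sequence $(a_n)_{n\ge0}$ of nonnegative reals is a Pólya frequency sequence if its Toeplitz matrix $[a_{i-j}]_{i,j\ge0}$ (with $a_m=0$ for $m<0$) is TP; a formal power series is a Pólya frequency power series if its coefficient sequence is a Pólya frequency sequence. *)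

From HB Require Import structures.
From mathcomp Require Import all_boot all_order all_algebra.
From mathcomp Require Import reals.
Set Implicit Arguments. Unset Strict Implicit. Unset Printing Implicit Defensive.
Import Order.TTheory GRing.Theory Num.Theory.
Local Open Scope ring_scope.

Definition infmx (R : Type) := nat -> nat -> R.

Definition strict_incr (k : nat) (r : 'I_k -> nat) : Prop :=
  forall a b : 'I_k, (a < b)%N -> (r a < r b)%N.

Definition totally_positive (R : realType) (M : infmx R) : Prop :=
  forall (k : nat) (r c : 'I_k -> nat),
    strict_incr r -> strict_incr c ->
    0 <= \det (\matrix_(a < k, b < k) M (r a) (c b)).

Definition toeplitz (R : realType) (a : nat -> R) : infmx R :=
  fun i j => if (j <= i)%N then a (i - j)%N else 0.

(* Polya frequency sequence (equivalently, PF power series, identified with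
   its coefficient sequence). *)
Definition PF_seq (R : realType) (a : nat -> R) : Prop :=
  (forall n, 0 <= a n) /\ totally_positive (toeplitz a).

(* Quasi-Riordan array [g, f]: r_{n,0} = g_n, r_{n,k} = f_{n-k+1} for k >= 1,
   with f_j = 0 for j <= 0 (here f 0 = 0 is assumed of f). *)
Definition quasi_riordan (R : realType) (g f : nat -> R) : infmx R :=
  fun n k => if k == 0%N then g n
             else if (k <= n.+1)%N then f (n.+1 - k)%N else 0.

From HB Require Import structures.
From mathcomp Require Import all_boot all_order all_algebra.
From mathcomp Require Import reals.
Set Implicit Arguments. Unset Strict Implicit. Unset Printing Implicit Defensive.
Import Order.TTheory GRing.Theory Num.Theory.
Local Open Scope ring_scope.

(* The minor of [1/(1 - alpha t), f] on rows {1, 2} and columns {0, 1} is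
   alpha f_2 - alpha^2 f_1, negative as soon as alpha > f_2 / f_1; of the PF
   property of f only f_1 > 0 and f_2 >= 0 are needed.  The
   geometric sequence is PF: expanding a minor of its Toeplitz matrix along
   the first row, either that row vanishes, or two columns are proportional
   (since alpha^(i - j) = alpha^(j' - j) alpha^(i - j') for j <= j' <= i),
   or the minor is a nonnegative power of alpha times a smaller minor. *)

Lemma det_col_proportional (R : comPzRingType) n (A : 'M[R]_n) i j s :
  i != j -> (forall a, A a i = s * A a j) -> \det A = 0.
Proof.
move=> neq_ij Aij.
pose B := \matrix_(a, b) A a (if b == i then j else b).
pose d := \row_b (if b == i then s else 1).
have -> : A = B *m diag_mx d.
  apply/matrixP => a b; rewrite mul_mx_diag !mxE.
  by case: eqP => [->|_]; rewrite ?mulr1 // Aij mulrC.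
rewrite det_mulmx -det_tr (determinant_alternate neq_ij) ?mul0r // => b.
by rewrite !mxE eqxx eq_sym (negbTE neq_ij).
Qed.

Lemma strict_incr_lift0 k (r : 'I_k.+1 -> nat) :
  strict_incr r -> strict_incr (r \o lift ord0).
Proof. by move=> r_incr a b ab; apply: r_incr. Qed.

Lemma strict_incr_ord0 k (r : 'I_k.+1 -> nat) a :
  strict_incr r -> (r ord0 <= r a)%N.
Proof.
move=> r_incr; have [a0|a_gt0] := posnP a; last exact/ltnW/r_incr.
by rewrite (_ : a = ord0) //; apply: val_inj.
Qed.

Section GeometricSequence.

Variables (R : realType) (alpha : R).
Hypothesis alpha_ge0 : 0 <= alpha.

Lemma toeplitz_geom_minor_ge0 k (r c : 'I_k -> nat) :
  strict_incr r -> strict_incr c ->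
  0 <= \det (\matrix_(a < k, b < k) toeplitz (fun n => alpha ^+ n) (r a) (c b)).
Proof.
elim: k r c => [|k IHk] r c r_incr c_incr; first by rewrite det_mx00.
set A := \matrix_(a, b) _.
have c0_min b := strict_incr_ord0 b c_incr.
have r0_min a := strict_incr_ord0 a r_incr.
have [r0_lt_c0 | c0_le_r0] := ltnP (r ord0) (c ord0).
  rewrite (expand_det_row A ord0) big1 // => b _.
  by rewrite !mxE /toeplitz leqNgt (leq_trans r0_lt_c0 (c0_min b)) mul0r.
have [b /andP[b_gt0 cb_le_r0] | r0_lt_c] :=
  pickP (fun b : 'I_k.+1 => (0 < b)%N && (c b <= r ord0)%N).
  rewrite (@det_col_proportional _ _ A ord0 b (alpha ^+ (c b - c ord0))) //.
    by rewrite -val_eqE /= eq_sym -lt0n.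
  move=> a; have cb_le_ra := leq_trans cb_le_r0 (r0_min a).
  rewrite !mxE /toeplitz cb_le_ra (leq_trans (c0_min b) cb_le_ra) -exprD.
  by rewrite addnC addnBA ?c0_min // subnK.
rewrite (expand_det_row A ord0) big_ord_recl big1 ?addr0 => [|b _]; last first.
  have /negbT := r0_lt_c (lift ord0 b); rewrite /= -ltnNge => r0_lt_cb.
  by rewrite !mxE /toeplitz leqNgt r0_lt_cb mul0r.
rewrite /cofactor expr0 mul1r mxE /toeplitz c0_le_r0.
have -> : row' ord0 (col' ord0 A) =
    \matrix_(a, b) toeplitz (fun n => alpha ^+ n) ((r \o lift ord0) a)
                                                   ((c \o lift ord0) b).
  by apply/matrixP => a b; rewrite !mxE.
by apply: mulr_ge0; [exact: exprn_ge0 | apply: IHk; exact: strict_incr_lift0].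
Qed.

Lemma geometric_PF : PF_seq (fun n => alpha ^+ n).
Proof. by split=> [n|]; [exact: exprn_ge0 | exact: toeplitz_geom_minor_ge0]. Qed.

End GeometricSequence.

Lemma totally_positive_minor2 (R : realType) (M : infmx R) i i' j j' :
  totally_positive M -> (i < i')%N -> (j < j')%N ->
  M i' j * M i j' <= M i j * M i' j'.
Proof.
move=> M_tp lt_ii' lt_jj'.
pose pair (x y : nat) (a : 'I_2) := if a == ord0 then x else y.
have pair_incr x y : (x < y)%N -> strict_incr (pair x y).
  by move=> lt_xy [[|[|?]] ?] [[|[|?]] ?].
have := M_tp 2%N _ _ (pair_incr _ _ lt_ii') (pair_incr _ _ lt_jj').
rewrite (expand_det_row _ ord0) !big_ord_recl big_ord0 addr0 /cofactor.
rewrite !det_mx11 !mxE /= expr0 expr1 mul1r mulN1r mulrN.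
by rewrite subr_ge0 mulrC.
Qed.

Lemma quasi_riordan_not_TP (R : realType) (g f : nat -> R) :
  g 1%N * f 2%N < g 2%N * f 1%N -> ~ totally_positive (quasi_riordan g f).
Proof.
move=> gf_lt /(@totally_positive_minor2 _ _ 1 2 0 1)/(_ erefl erefl).
by rewrite /quasi_riordan /= !subn1 leNgt gf_lt.
Qed.

Theorem corollary4p3 (R : realType) (f : nat -> R) :
  f 0%N = 0 -> f 1%N != 0 -> PF_seq f ->
  exists alpha : R, 0 < alpha /\
    ~ totally_positive (quasi_riordan (fun n => alpha ^+ n) f) /\
    PF_seq (fun n => alpha ^+ n) /\ PF_seq f.
Proof.
move=> _ f1_neq0 f_PF; have [f_ge0 _] := f_PF.
have f1_gt0 : 0 < f 1%N by rewrite lt0r f1_neq0 f_ge0.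
pose alpha := f 2%N / f 1%N + 1.
have alpha_gt0 : 0 < alpha by rewrite ltr_wpDl ?divr_ge0 ?f_ge0.
exists alpha; split=> //; split; last by split=> //; exact/geometric_PF/ltW.
apply: quasi_riordan_not_TP.
rewrite expr1 expr2 -mulrA ltr_pM2l // /alpha mulrDl divfK ?gt_eqF //.
by rewrite mul1r ltrDl.
Qed.
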